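(* If $K\subseteq\mathbb{R}^d$ is a pointwise Whitney regular compact set, then $(\mathcal{J}^1(K),\|\cdot\|_{\mathcal{J}^1(K)})$ is complete.
   Context: A continuous $df:K\to\mathbb{R}^d$ is a continuous derivative of $f:K\to\mathbb{R}$ on $K$ if $\lim_{y\to x,\,y\in K\setminus\{x\}}\frac{f(y)-f(x)-\langle df(x),y-x\rangle}{|y-x|}=0$ for all $x\in K$. The jet space is $\mathcal{J}^1(K)=\{(f,df): df \text{ is a continuous derivative of } f \text{ on } K\}$ (so $f$ is continuous) with norm $\|(f,df)\|_{\mathcal{J}^1(K)}=\|f\|_K+\|df\|_K$, $\|\cdot\|_K$ the sup norm on $K$. $K$ is pointwise Whitney regular if for every $x\in K$ there are a neighbourhood $V_x$ of $x$ and $C_x>0$ such that every $y\in V_x\cap K$ is joined to $x$ by a rectifiable path in $K$ of length at most $C_x|x-y|$ (a rectifiable path is a continuous map $\gamma:[a,b]\to K$ of finite length $\sup\sum_j|\gamma(t_j)-\gamma(t_{j-1})|$). *)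

From mathcomp Require Import ssreflect ssrfun ssrbool eqtype ssrnat seq fintype bigop.
From Stdlib Require Import Reals ClassicalEpsilon.
Set Implicit Arguments.
Unset Strict Implicit.
Local Open Scope R_scope.

Definition Vec (d : nat) := 'I_d -> R.

Definition vsub d (x y : Vec d) : Vec d := fun i => x i - y i.
Definition dot d (x y : Vec d) : R := \big[Rplus/0]_(i < d) (x i * y i).
Definition vnorm d (x : Vec d) : R := sqrt (dot x x).

Definition open_set d (U : Vec d -> Prop) : Prop :=
  forall x, U x -> exists r, 0 < r /\ forall y, vnorm (vsub y x) < r -> U y.

Definition compact_set d (K : Vec d -> Prop) : Prop :=
  forall (I : Type) (U : I -> Vec d -> Prop),
    (forall i, open_set (U i)) ->
    (forall x, K x -> exists i, U i x) ->
    exists l : list I, forall x, K x -> exists i, List.In i l /\ U i x.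

Definition cont_on d (K : Vec d -> Prop) (f : Vec d -> R) : Prop :=
  forall x, K x -> forall eps, 0 < eps -> exists delta, 0 < delta /\
    forall y, K y -> vnorm (vsub y x) < delta -> Rabs (f y - f x) < eps.

Definition vcont_on d (K : Vec d -> Prop) (g : Vec d -> Vec d) : Prop :=
  forall x, K x -> forall eps, 0 < eps -> exists delta, 0 < delta /\
    forall y, K y -> vnorm (vsub y x) < delta -> vnorm (vsub (g y) (g x)) < eps.

Definition is_cont_deriv d (K : Vec d -> Prop) (f : Vec d -> R) (df : Vec d -> Vec d) : Prop :=
  vcont_on K df /\
  forall x, K x -> forall eps, 0 < eps -> exists delta, 0 < delta /\
    forall y, K y -> y <> x -> vnorm (vsub y x) < delta ->
      Rabs ((f y - f x - dot (df x) (vsub y x)) / vnorm (vsub y x)) < eps.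

Definition in_J1 d (K : Vec d -> Prop) (f : Vec d -> R) (df : Vec d -> Vec d) : Prop :=
  cont_on K f /\ is_cont_deriv K f df.

(* ||g||_K = sup_{x in K} g x for a nonnegative quantity g (here |f| or |df|);
   defined as the least upper bound when it exists, 0 otherwise
   (it exists for the bounded functions considered, K nonempty). *)
Definition supK d (K : Vec d -> Prop) (g : Vec d -> R) : R :=
  match excluded_middle_informative
          (exists l, is_lub (fun r => exists x, K x /\ r = g x) l) with
  | left H => proj1_sig (constructive_indefinite_description _ H)
  | right _ => 0
  end.

Definition J1norm d (K : Vec d -> Prop) (f : Vec d -> R) (df : Vec d -> Vec d) : R :=
  supK K (fun x => Rabs (f x)) + supK K (fun x => vnorm (df x)).

Definition J1dist d (K : Vec d -> Prop) (f1 : Vec d -> R) (df1 : Vec d -> Vec d)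
  (f2 : Vec d -> R) (df2 : Vec d -> Vec d) : R :=
  J1norm K (fun x => f1 x - f2 x) (fun x => vsub (df1 x) (df2 x)).

Fixpoint poly_len d (gamma : R -> Vec d) (t : nat -> R) (n : nat) : R :=
  match n with
  | O => 0
  | S m => poly_len gamma t m + vnorm (vsub (gamma (t (S m))) (gamma (t m)))
  end.

Definition length_le d (gamma : R -> Vec d) (a b L : R) : Prop :=
  forall (t : nat -> R) (n : nat),
    t O = a -> t n = b -> (forall j, (j < n)%nat -> t j <= t (S j)) ->
    poly_len gamma t n <= L.

Definition path_in d (K : Vec d -> Prop) (gamma : R -> Vec d) (a b : R) : Prop :=
  a <= b /\
  (forall s, a <= s <= b -> K (gamma s)) /\
  (forall s, a <= s <= b -> forall eps, 0 < eps -> exists delta, 0 < delta /\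
     forall u, a <= u <= b -> Rabs (u - s) < delta -> vnorm (vsub (gamma u) (gamma s)) < eps).

(* pointwise Whitney regularity (neighbourhood V_x taken to contain an open ball
   B(x, r); shrinking V_x to that ball is harmless) *)
Definition pw_whitney_regular d (K : Vec d -> Prop) : Prop :=
  forall x, K x -> exists (V : Vec d -> Prop) (C : R),
    open_set V /\ V x /\ 0 < C /\
    forall y, V y -> K y ->
      exists (gamma : R -> Vec d) (a b : R),
        path_in K gamma a b /\ gamma a = x /\ gamma b = y /\
        length_le gamma a b (C * vnorm (vsub x y)).

(* A Cauchy sequence of jets (F n, dF n) is uniformly Cauchy on K (continuous
   functions are bounded on the compact K, so the sup norms dominate pointwise values);
   hence F n and dF n converge uniformly to continuous limits f and df.  Whitney regularity
   is what makes df a derivative of f: the difference F m - F n has pointwise Lipschitz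
   constant at most sup_K |dF m - dF n|, so a mean value inequality along a path in K of
   length at most C |x - y| (proved by real induction on the parameter interval) bounds its
   increment between x and y by sup_K |dF m - dF n| C |x - y|.  Letting m go to infinity,
   the remainder of f at x is at most that of F n plus terms of size
   sup_K |dF n - df| (C + 1) |y - x|. *)

From Pilot Require Import Defs.
From Stdlib Require Import Reals RList Lra Psatz Classical ClassicalEpsilon FunctionalExtensionality.
From mathcomp Require Import ssreflect ssrfun ssrbool eqtype seq fintype bigop.
From mathcomp Require ssrnat.
Set Implicit Arguments.
Unset Strict Implicit.
Local Open Scope R_scope.

Lemma big_Rplus_lin3 (I : Type) (r : seq I) (a b c : R) (f g h : I -> R) :
  \big[Rplus/0]_(i <- r) (a * f i + b * g i + c * h i) =
  a * \big[Rplus/0]_(i <- r) f i + b * \big[Rplus/0]_(i <- r) g i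
  + c * \big[Rplus/0]_(i <- r) h i.
Proof. by elim: r => [|i r IH]; rewrite ?big_nil ?big_cons ?IH; ring. Qed.

Lemma big_Rplus_ge0 (I : Type) (r : seq I) (f : I -> R) :
  (forall i, 0 <= f i) -> 0 <= \big[Rplus/0]_(i <- r) f i.
Proof.
move=> f_ge0; elim: r => [|i r IH]; rewrite ?big_nil ?big_cons; first lra.
by have := f_ge0 i; lra.
Qed.

Lemma big_Rplus_ge_term (I : eqType) (r : seq I) (f : I -> R) j :
  (forall i, 0 <= f i) -> j \in r -> f j <= \big[Rplus/0]_(i <- r) f i.
Proof.
move=> f_ge0; elim: r => [|i r IH] //; rewrite big_cons in_cons => /orP [/eqP ->|jr].
- by have := big_Rplus_ge0 r f_ge0; lra.
- by have := IH jr; have := f_ge0 i; lra.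
Qed.

Lemma big_Rplus_cv (I : Type) (r : seq I) (u : nat -> I -> R) (l : I -> R) :
  (forall i, Un_cv (fun m => u m i) (l i)) ->
  Un_cv (fun m => \big[Rplus/0]_(i <- r) u m i) (\big[Rplus/0]_(i <- r) l i).
Proof.
move=> u_cv; elim: r => [|i r IH] e e_gt0.
  by exists 0%nat => n _; rewrite !big_nil /Rdist Rminus_diag Rabs_R0.
have [N HN] := CV_plus _ _ _ _ (u_cv i) IH e e_gt0.
by exists N => n Nn; rewrite !big_cons; exact: HN.
Qed.

Lemma dot_ge0 d (x : Vec d) : 0 <= dot x x.
Proof. by apply: big_Rplus_ge0 => i; apply: Rle_0_sqr. Qed.

Lemma dot_sub_l d (x y z : Vec d) : dot (vsub x y) z = dot x z - dot y z.
Proof.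
rewrite /dot; set X := \big[Rplus/0]_(i < d) (x i * z i).
have -> : X - \big[Rplus/0]_(i < d) (y i * z i) =
  1 * X + (-1) * \big[Rplus/0]_(i < d) (y i * z i) + 0 * X by ring.
by rewrite -big_Rplus_lin3; apply: eq_bigr => i _; rewrite /vsub; ring.
Qed.

Lemma cauchy_schwarz d (x y : Vec d) : Rabs (dot x y) <= vnorm x * vnorm y.
Proof.
have quad t : dot (fun i => x i - t * y i) (fun i => x i - t * y i)
              = dot x x - 2 * t * dot x y + t * t * dot y y.
  have -> : dot x x - 2 * t * dot x y + t * t * dot y y =
            1 * dot x x + (- 2 * t) * dot x y + (t * t) * dot y y by ring.
  by rewrite /dot -big_Rplus_lin3; apply: eq_bigr => i _; ring.
have := dot_ge0 x; have := dot_ge0 y.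
set A := dot x x in quad *; set B := dot x y in quad *; set C := dot y y in quad *.
move=> C_ge0 A_ge0.
have discr : B * B <= A * C.
  case: (Req_dec C 0) => [C0 | C_neq0].
    case: (Req_dec B 0) => [B0 | B_neq0]; first by rewrite B0 C0; lra.
    have := dot_ge0 (fun i => x i - ((A + 1) / (2 * B)) * y i); rewrite quad C0.
    have -> : 2 * ((A + 1) / (2 * B)) * B = A + 1 by field.
    lra.
  have := dot_ge0 (fun i => x i - (B / C) * y i); rewrite quad.
  have -> : A - 2 * (B / C) * B + B / C * (B / C) * C = (A * C - B * B) / C by field.
  move=> q_ge0; have := Rmult_le_pos _ _ q_ge0 C_ge0.
  have -> : (A * C - B * B) / C * C = A * C - B * B by field.
  lra.
rewrite /vnorm -sqrt_mult // -sqrt_Rsqr_abs; exact: sqrt_le_1_alt.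
Qed.

Lemma vnorm_ge0 d (x : Vec d) : 0 <= vnorm x.
Proof. exact: sqrt_pos. Qed.

Lemma vnorm_sq d (x : Vec d) : vnorm x * vnorm x = dot x x.
Proof. exact/sqrt_sqrt/dot_ge0. Qed.

Lemma vnorm_triangle d (x y z : Vec d) :
  vnorm (vsub x z) <= vnorm (vsub x y) + vnorm (vsub y z).
Proof.
set u := vsub x y; set v := vsub y z.
have expand : dot (vsub x z) (vsub x z) = dot u u + 2 * dot u v + dot v v.
  have -> : dot u u + 2 * dot u v + dot v v = 1 * dot u u + 2 * dot u v + 1 * dot v v by ring.
  by rewrite /dot -big_Rplus_lin3; apply: eq_bigr => i _; rewrite /u /v /vsub; ring.
have := cauchy_schwarz u v; have := Rle_abs (dot u v).
have := vnorm_sq u; have := vnorm_sq v; have := vnorm_sq (vsub x z).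
have := vnorm_ge0 u; have := vnorm_ge0 v; have := vnorm_ge0 (vsub x z).
move=> *; apply: Rsqr_incr_0_var; rewrite /Rsqr; nra.
Qed.

Lemma vnorm_sym d (x y : Vec d) : vnorm (vsub x y) = vnorm (vsub y x).
Proof. by rewrite /vnorm /dot; congr sqrt; apply: eq_bigr => i _; rewrite /vsub; ring. Qed.

Lemma vnorm_vsub_diag d (x : Vec d) : vnorm (vsub x x) = 0.
Proof. by rewrite /vnorm dot_sub_l Rminus_diag sqrt_0. Qed.

Lemma Rabs_coord_le_vnorm d (x : Vec d) i : Rabs (x i) <= vnorm x.
Proof.
rewrite /vnorm -sqrt_Rsqr_abs; apply: sqrt_le_1_alt.
apply: (big_Rplus_ge_term (f := fun i => x i * x i)); last exact: mem_index_enum.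
by move=> j; apply: Rle_0_sqr.
Qed.

Lemma vnorm_vsub_gt0 d (x y : Vec d) : x <> y -> 0 < vnorm (vsub x y).
Proof.
move=> xy; case: (vnorm_ge0 (vsub x y)) => // norm0; case: xy.
apply: functional_extensionality => i.
have := Rabs_coord_le_vnorm (vsub x y) i; rewrite -norm0 /vsub.
by split_Rabs; lra.
Qed.

Lemma dot_sub_le d (u v z : Vec d) :
  Rabs (dot u z - dot v z) <= vnorm (vsub u v) * vnorm z.
Proof. by rewrite -dot_sub_l; apply: cauchy_schwarz. Qed.

Lemma vnorm_cv d (u : nat -> Vec d) (l : Vec d) :
  (forall i, Un_cv (fun m => u m i) (l i)) -> Un_cv (fun m => vnorm (u m)) (vnorm l).
Proof.
move=> u_cv; apply: continuity_seq; first exact/continuity_pt_sqrt/dot_ge0.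
by apply: big_Rplus_cv => i; apply: CV_mult.
Qed.

Lemma Un_cv_const (c : R) : Un_cv (fun _ => c) c.
Proof. by move=> e e_gt0; exists 0%nat => n _; rewrite /Rdist Rminus_diag Rabs_R0. Qed.

Lemma Un_cv_ub (u : nat -> R) (l B : R) (N : nat) :
  Un_cv u l -> (forall n, (N <= n)%nat -> u n <= B) -> l <= B.
Proof.
move=> u_cv u_le; apply: (@Rle_cv_lim (fun n => u (n + N)%nat) (fun _ => B)).
- by move=> n; apply: u_le; lia.
- exact: CV_shift'.
- exact: Un_cv_const.
Qed.

Lemma Un_cv_Rabs_ub (u : nat -> R) (l B : R) (N : nat) :
  Un_cv u l -> (forall n, (N <= n)%nat -> Rabs (u n) <= B) -> Rabs l <= B.
Proof. by move/cv_cvabs; apply: Un_cv_ub. Qed.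

(* The junk value [0] is returned for sequences that are not Cauchy. *)
Definition lim_seq (u : nat -> R) : R :=
  match excluded_middle_informative (Cauchy_crit u) with
  | left u_cauchy => proj1_sig (R_complete u u_cauchy)
  | right _ => 0
  end.

Lemma lim_seq_cv (u : nat -> R) : Cauchy_crit u -> Un_cv u (lim_seq u).
Proof.
move=> u_cauchy; rewrite /lim_seq; case: excluded_middle_informative => [?|//].
exact: proj2_sig.
Qed.

Lemma Rabs_le_of_div_lt (q n e : R) : 0 < n -> Rabs (q / n) < e -> Rabs q <= e * n.
Proof.
move=> n_gt0; rewrite Rabs_mult Rabs_inv (Rabs_pos_eq n); last lra.
move=> lt; have -> : Rabs q = Rabs q * / n * n by field; lra.
by apply: Rmult_le_compat_r; lra.
Qed.

Lemma Rabs_div_lt (q n e : R) : 0 < n -> Rabs q < e * n -> Rabs (q / n) < e.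
Proof.
move=> n_gt0 lt; rewrite Rabs_mult Rabs_inv (Rabs_pos_eq n); last lra.
apply: (Rmult_lt_reg_r n) => //.
by have -> : Rabs q * / n * n = Rabs q by field; lra.
Qed.

Lemma Rabs_add3_le (a b c A B C : R) :
  Rabs a <= A -> Rabs b <= B -> Rabs c <= C -> Rabs (a + b + c) <= A + B + C.
Proof.
move=> ? ? ?; have := Rabs_triang (a + b) c; have := Rabs_triang a b; lra.
Qed.

Lemma supK_le d (K : Vec d -> Prop) (g : Vec d -> R) (B : R) :
  0 <= B -> (forall x, K x -> g x <= B) -> supK K g <= B.
Proof.
move=> B_ge0 g_le; rewrite /supK; case: excluded_middle_informative => [lub_ex|_] //.
case: constructive_indefinite_description => l [_ l_least] /=.
by apply: l_least => r [x [Kx ->]]; apply: g_le.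
Qed.

Lemma supK_ge0 d (K : Vec d -> Prop) (g : Vec d -> R) :
  (forall x, K x -> 0 <= g x) -> 0 <= supK K g.
Proof.
move=> g_ge0; rewrite /supK; case: excluded_middle_informative => [lub_ex|_]; last lra.
case: constructive_indefinite_description => l [l_ub l_least] /=.
case: (classic (exists x, K x)) => [[x Kx] | K0].
  by have := l_ub (g x) (ex_intro _ x (conj Kx erefl)); have := g_ge0 x Kx; lra.
suff : l <= l - 1 by lra.
by apply: l_least => r [x [Kx _]]; case: K0; exists x.
Qed.

Lemma supK_ge d (K : Vec d -> Prop) (g : Vec d -> R) (x : Vec d) :
  (exists B, forall y, K y -> g y <= B) -> K x -> g x <= supK K g.
Proof.
move=> [B g_le] Kx; rewrite /supK; case: excluded_middle_informative => [lub_ex|no_lub].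
  case: constructive_indefinite_description => l [l_ub _] /=.
  by apply: l_ub; exists x.
have bd : bound (fun r => exists y, K y /\ r = g y).
  by exists B => r [y [Ky ->]]; apply: g_le.
have [m m_lub] := completeness _ bd (ex_intro _ (g x) (ex_intro _ x (conj Kx erefl))).
by case: no_lub; exists m.
Qed.

Lemma cont_on_bounded d (K : Vec d -> Prop) (g : Vec d -> R) :
  compact_set K -> cont_on K g -> exists B, forall x, K x -> Rabs (g x) <= B.
Proof.
move=> K_compact g_cont.
pose near_center c y := K c /\ exists del, 0 < del /\
  (forall z, K z -> vnorm (vsub z c) < del -> Rabs (g z - g c) < 1) /\ vnorm (vsub y c) < del.
(* Unqualified, [open_set] would be Stdlib's [Rtopology.open_set] on [R]. *)
have open_near c : Defs.open_set (near_center c).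
  move=> y [Kc [del [del_gt0 [g_near y_near]]]].
  exists (del - vnorm (vsub y c)); split; first lra.
  move=> z zy; split=> //; exists del; do 2 split=> //.
  by have := vnorm_triangle z y c; lra.
have cover x : K x -> exists c, near_center c x.
  move=> Kx; exists x; split=> //.
  have [del [del_gt0 g_near]] := g_cont x Kx 1 Rlt_0_1.
  by exists del; do 2 split=> //; rewrite vnorm_vsub_diag.
have [cs cs_cover] := K_compact _ _ open_near cover.
exists (MaxRlist (List.map (fun c => Rabs (g c) + 1) cs)) => y Ky.
have [c [c_in [Kc [del [_ [g_near y_near]]]]]] := cs_cover y Ky.
apply: Rle_trans (MaxRlist_P1 _ _ (List.in_map (fun c => Rabs (g c) + 1) _ _ c_in)).
have := g_near y Ky y_near; have := Rabs_triang (g y - g c) (g c).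
by rewrite /Rminus Rplus_assoc Rplus_opp_l Rplus_0_r; lra.
Qed.

Lemma cont_on_sub d (K : Vec d -> Prop) (g1 g2 : Vec d -> R) :
  cont_on K g1 -> cont_on K g2 -> cont_on K (fun x => g1 x - g2 x).
Proof.
move=> g1_cont g2_cont x Kx e e_gt0.
have [d1 [d1_gt0 near1]] := g1_cont x Kx (e / 2) ltac:(lra).
have [d2 [d2_gt0 near2]] := g2_cont x Kx (e / 2) ltac:(lra).
exists (Rmin d1 d2); split=> [|y Ky yx]; first exact: Rmin_glb_lt.
have := near1 y Ky (Rlt_le_trans _ _ _ yx (Rmin_l _ _)).
have := near2 y Ky (Rlt_le_trans _ _ _ yx (Rmin_r _ _)).
by split_Rabs; lra.
Qed.

Lemma cont_on_vnorm_vsub d (K : Vec d -> Prop) (g1 g2 : Vec d -> Vec d) :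
  vcont_on K g1 -> vcont_on K g2 -> cont_on K (fun x => vnorm (vsub (g1 x) (g2 x))).
Proof.
move=> g1_cont g2_cont x Kx e e_gt0.
have [d1 [d1_gt0 near1]] := g1_cont x Kx (e / 2) ltac:(lra).
have [d2 [d2_gt0 near2]] := g2_cont x Kx (e / 2) ltac:(lra).
exists (Rmin d1 d2); split=> [|y Ky yx]; first exact: Rmin_glb_lt.
have := near1 y Ky (Rlt_le_trans _ _ _ yx (Rmin_l _ _)).
have := near2 y Ky (Rlt_le_trans _ _ _ yx (Rmin_r _ _)).
have := vnorm_triangle (g1 y) (g1 x) (g2 y); have := vnorm_triangle (g1 x) (g2 x) (g2 y).
have := vnorm_triangle (g1 x) (g1 y) (g2 x); have := vnorm_triangle (g1 y) (g2 y) (g2 x).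
rewrite (vnorm_sym (g2 x) (g2 y)) (vnorm_sym (g1 x) (g1 y)).
by split_Rabs; lra.
Qed.

Lemma J1dist_lt_pointwise d (K : Vec d -> Prop) F1 dF1 F2 dF2 (e : R) :
  compact_set K -> in_J1 K F1 dF1 -> in_J1 K F2 dF2 -> J1dist K F1 dF1 F2 dF2 < e ->
  forall x, K x -> Rabs (F1 x - F2 x) < e /\ vnorm (vsub (dF1 x) (dF2 x)) < e.
Proof.
move=> K_compact [F1_cont [dF1_cont _]] [F2_cont [dF2_cont _]] dist_lt x Kx.
have diff_le := supK_ge (cont_on_bounded K_compact (cont_on_sub F1_cont F2_cont)) Kx.
have [B ddiff_bd] := cont_on_bounded K_compact (cont_on_vnorm_vsub dF1_cont dF2_cont).
have ddiff_le := supK_ge (ex_intro _ B (fun y Ky => Rle_trans _ _ _ (Rle_abs _) (ddiff_bd y Ky))) Kx.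
have := supK_ge0 (K := K) (fun y _ => Rabs_pos (F1 y - F2 y)).
have := supK_ge0 (K := K) (fun y _ => vnorm_ge0 (vsub (dF1 y) (dF2 y))).
by move: dist_lt diff_le ddiff_le; rewrite /J1dist /J1norm /=; lra.
Qed.

Lemma cont_on_unif_lim d (K : Vec d -> Prop) (G : nat -> Vec d -> R) (g : Vec d -> R) :
  (forall n, cont_on K (G n)) ->
  (forall e, 0 < e -> exists n, forall x, K x -> Rabs (G n x - g x) <= e) ->
  cont_on K g.
Proof.
move=> G_cont G_unif x Kx e e_gt0.
have [n Gn_close] := G_unif (e / 3) ltac:(lra).
have [del [del_gt0 Gn_near]] := G_cont n x Kx (e / 3) ltac:(lra).
exists del; split=> // y Ky yx.
have := Gn_near y Ky yx; have := Gn_close x Kx; have := Gn_close y Ky.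
by split_Rabs; lra.
Qed.

Lemma vcont_on_unif_lim d (K : Vec d -> Prop) (G : nat -> Vec d -> Vec d) (g : Vec d -> Vec d) :
  (forall n, vcont_on K (G n)) ->
  (forall e, 0 < e -> exists n, forall x, K x -> vnorm (vsub (G n x) (g x)) <= e) ->
  vcont_on K g.
Proof.
move=> G_cont G_unif x Kx e e_gt0.
have [n Gn_close] := G_unif (e / 3) ltac:(lra).
have [del [del_gt0 Gn_near]] := G_cont n x Kx (e / 3) ltac:(lra).
exists del; split=> // y Ky yx.
have := Gn_near y Ky yx; have := Gn_close x Kx; have := Gn_close y Ky.
have := vnorm_triangle (g y) (G n y) (g x); have := vnorm_triangle (G n y) (G n x) (g x).
rewrite (vnorm_sym (g y) (G n y)); lra.
Qed.

Lemma real_induction (a b : R) (P : R -> Prop) :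
  a <= b -> P a ->
  (forall s, a <= s <= b -> exists del, 0 < del /\
     (forall u, a <= u <= s -> s - u < del -> P u -> P s) /\
     (P s -> forall v, s <= v <= b -> v - s < del -> P v)) ->
  P b.
Proof.
move=> ab Pa P_local.
pose E s := a <= s <= b /\ forall u, a <= u <= s -> P u.
have Ea : E a by split=> [|u u_a]; [lra | have -> : u = a by lra].
have E_bd : bound E by exists b => s [s_ab _]; lra.
have [sig [sig_ub sig_least]] := completeness E E_bd (ex_intro _ a Ea).
have sig_ab : a <= sig <= b.
  by split; [apply: sig_ub | apply: sig_least => s [s_ab _]; lra].
have P_below u : a <= u < sig -> P u.
  move=> u_sig; apply: NNPP => notPu.
  suff : sig <= u by lra.
  apply: sig_least => s [_ Es]; apply: Rnot_lt_le => us; apply: notPu; apply: Es; lra.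
have [del [del_gt0 [P_left P_right]]] := P_local sig sig_ab.
have Psig : P sig.
  case: (Req_dec sig a) => [-> // | sig_neq_a].
  have := Rmax_l a (sig - del / 2); have := Rmax_r a (sig - del / 2).
  have : Rmax a (sig - del / 2) < sig by apply: Rmax_lub_lt; lra.
  move=> ? ? ?; apply: (P_left (Rmax a (sig - del / 2))); try lra.
  by apply: P_below; lra.
suff -> : b = sig by [].
apply: Rle_antisym; last exact: (proj2 sig_ab).
apply: Rnot_lt_le => sig_b.
set v := Rmin b (sig + del / 2).
have : sig < v by apply: Rmin_glb_lt; lra.
have := Rmin_l b (sig + del / 2); have := Rmin_r b (sig + del / 2); rewrite -/v => ? ? ?.
suff Ev : E v by have := sig_ub v Ev; lra.
split=> [|u u_v]; first lra.
case: (Rle_lt_dec u sig) => [u_sig | sig_u].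
  by case: (Req_dec u sig) => [-> // | ?]; apply: P_below; lra.
by apply: (P_right Psig); lra.
Qed.

Section Partitions.
Import ssrnat.
Variables (d : nat) (gam : R -> Vec d) (g : Vec d -> R) (c a : R).

Definition increment_le_poly_len (s : R) : Prop :=
  exists (t : nat -> R) (k : nat),
    t O = a /\ t k = s /\ (forall j, (j < k)%nat -> t j <= t j.+1) /\
    Rabs (g (gam s) - g (gam a)) <= c * poly_len gam t k.

Lemma poly_len_ext (t t' : nat -> R) (k : nat) :
  (forall j, (j <= k)%nat -> t j = t' j) -> poly_len gam t k = poly_len gam t' k.
Proof.
elim: k => [|k IH] tt' //=.
by rewrite IH => [|j jk]; [rewrite !tt' | apply: tt'; apply: leqW].
Qed.

Lemma increment_le_poly_len_snoc (u v : R) :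
  increment_le_poly_len u -> u <= v ->
  Rabs (g (gam v) - g (gam u)) <= c * vnorm (vsub (gam v) (gam u)) ->
  increment_le_poly_len v.
Proof.
move=> [t [k [t0 [tk [t_mono incr_le]]]]] uv step_le.
exists (fun j => if (j <= k)%nat then t j else v), k.+1; cbv beta.
rewrite ltnn; split; first by rewrite t0.
split=> //; split.
  move=> j; rewrite ltnS => jk; case: (ltnP j k) => [j_lt_k | k_le_j].
    by rewrite (ltnW j_lt_k); apply: t_mono.
  have -> : j = k by apply/eqP; rewrite eqn_leq jk k_le_j.
  by rewrite leqnn tk.
rewrite [poly_len _ _ _]/= leqnn ltnn -(@poly_len_ext t) => [|j ->] //; rewrite tk.
have := Rabs_triang (g (gam v) - g (gam u)) (g (gam u) - g (gam a)).
have -> : g (gam v) - g (gam u) + (g (gam u) - g (gam a)) = g (gam v) - g (gam a) by ring.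
by rewrite Rmult_plus_distr_l; lra.
Qed.

End Partitions.

Definition pointwise_lip_le d (K : Vec d -> Prop) (g : Vec d -> R) (M : R) : Prop :=
  forall x, K x -> forall e, 0 < e -> exists del, 0 < del /\
    forall z, K z -> vnorm (vsub z x) < del -> Rabs (g z - g x) <= (M + e) * vnorm (vsub z x).

Lemma path_increment_le d (K : Vec d -> Prop) (g : Vec d -> R) (M : R)
    (gam : R -> Vec d) (a b L : R) :
  0 <= M -> pointwise_lip_le K g M -> path_in K gam a b -> length_le gam a b L ->
  Rabs (g (gam b) - g (gam a)) <= M * L.
Proof.
move=> M_ge0 g_lip [ab [gam_in gam_cont]] len_le.
have L_ge0 : 0 <= L.
  apply: Rle_trans (len_le (fun j => if j is O then a else b) 1%nat erefl erefl _).
    by rewrite /= Rplus_0_l; apply: vnorm_ge0.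
  by case=> [|j] //= _; lra.
suff incr_le e : 0 < e -> Rabs (g (gam b) - g (gam a)) <= (M + e) * L.
  apply: Rle_plus_epsilon => eps eps_gt0.
  have q_gt0 : 0 < eps / (L + 1) by apply: Rdiv_lt_0_compat; lra.
  have q_eq : eps / (L + 1) * (L + 1) = eps by field; lra.
  by have := incr_le _ q_gt0; nra.
move=> e_gt0.
have [t [k [t0 [tk [t_mono incr_le]]]]] : increment_le_poly_len gam g (M + e) a b.
  apply: (@real_induction a b (increment_le_poly_len gam g (M + e) a)) => //.
    exists (fun _ => a), 0%nat; do 3 split=> //=.
    by rewrite Rminus_diag Rabs_R0; lra.
  move=> s s_ab.
  have [del1 [del1_gt0 g_near]] := g_lip (gam s) (gam_in s s_ab) e e_gt0.
  have [del [del_gt0 gam_near]] := gam_cont s s_ab del1 del1_gt0.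
  have g_step u : a <= u <= b -> Rabs (u - s) < del ->
      Rabs (g (gam u) - g (gam s)) <= (M + e) * vnorm (vsub (gam u) (gam s)).
    by move=> u_ab us; apply: g_near; [apply: gam_in | apply: gam_near].
  exists del; split=> //; split=> [u u_as su Pu | Ps v v_sb vs].
    apply: (increment_le_poly_len_snoc Pu); first lra.
    rewrite Rabs_minus_sym vnorm_sym; apply: g_step; first lra.
    by rewrite Rabs_left1; lra.
  apply: (increment_le_poly_len_snoc Ps); first lra.
  by apply: g_step; [lra | rewrite Rabs_pos_eq; lra].
apply: Rle_trans incr_le _; apply: Rmult_le_compat_l; first lra.
exact: len_le.
Qed.

Lemma cont_deriv_sub_lip d (K : Vec d -> Prop) F1 dF1 F2 dF2 (M : R) :
  is_cont_deriv K F1 dF1 -> is_cont_deriv K F2 dF2 ->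
  (forall z, K z -> vnorm (vsub (dF1 z) (dF2 z)) <= M) ->
  pointwise_lip_le K (fun z => F1 z - F2 z) M.
Proof.
move=> [_ F1_deriv] [_ F2_deriv] ddiff_le x Kx e e_gt0.
have [d1 [d1_gt0 rem1]] := F1_deriv x Kx (e / 2) ltac:(lra).
have [d2 [d2_gt0 rem2]] := F2_deriv x Kx (e / 2) ltac:(lra).
exists (Rmin d1 d2); split=> [|z Kz zx]; first exact: Rmin_glb_lt.
case: (classic (z = x)) => [-> | z_neq_x].
  by rewrite vnorm_vsub_diag Rminus_diag Rabs_R0; lra.
have zx_gt0 := vnorm_vsub_gt0 z_neq_x.
have rem1_le := Rabs_le_of_div_lt zx_gt0 (rem1 z Kz z_neq_x (Rlt_le_trans _ _ _ zx (Rmin_l _ _))).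
have rem2_le := Rabs_le_of_div_lt zx_gt0 (rem2 z Kz z_neq_x (Rlt_le_trans _ _ _ zx (Rmin_r _ _))).
have dot_le := dot_sub_le (dF1 x) (dF2 x) (vsub z x).
have := Rmult_le_compat_r _ _ _ (vnorm_ge0 (vsub z x)) (ddiff_le x Kx).
have -> : F1 z - F2 z - (F1 x - F2 x) =
  (F1 z - F1 x - dot (dF1 x) (vsub z x)) + - (F2 z - F2 x - dot (dF2 x) (vsub z x))
  + (dot (dF1 x) (vsub z x) - dot (dF2 x) (vsub z x)) by ring.
move=> ddiff_zx; apply: Rle_trans (Rabs_add3_le rem1_le _ (Rle_trans _ _ _ dot_le ddiff_zx)) _.
  by rewrite Rabs_Ropp; exact: rem2_le.
lra.
Qed.

Section JetLimit.
Variables (d : nat) (K : Vec d -> Prop) (F : nat -> Vec d -> R) (dF : nat -> Vec d -> Vec d).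
Hypothesis F_jet : forall n, in_J1 K (F n) (dF n).
Hypothesis F_unif_cauchy : forall e, 0 < e -> exists N, forall m n,
  (N <= m)%nat -> (N <= n)%nat -> forall x, K x ->
  Rabs (F m x - F n x) < e /\ vnorm (vsub (dF m x) (dF n x)) < e.

Definition jet_lim (x : Vec d) : R := lim_seq (fun n => F n x).
Definition djet_lim (x : Vec d) : Vec d := fun i => lim_seq (fun n => dF n x i).

Lemma jet_lim_cv x : K x -> Un_cv (fun n => F n x) (jet_lim x).
Proof.
move=> Kx; apply: lim_seq_cv => e e_gt0.
have [N F_close] := F_unif_cauchy e_gt0.
by exists N => m n Nm Nn; exact: (proj1 (F_close m n Nm Nn x Kx)).
Qed.

Lemma djet_lim_cv x i : K x -> Un_cv (fun n => dF n x i) (djet_lim x i).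
Proof.
move=> Kx; apply: lim_seq_cv => e e_gt0.
have [N F_close] := F_unif_cauchy e_gt0.
exists N => m n Nm Nn; apply: Rle_lt_trans (proj2 (F_close m n Nm Nn x Kx)).
exact: (Rabs_coord_le_vnorm (vsub (dF m x) (dF n x))).
Qed.

Lemma jet_lim_uniform e : 0 < e -> exists N, forall n, (N <= n)%nat -> forall x, K x ->
  Rabs (F n x - jet_lim x) <= e /\ vnorm (vsub (dF n x) (djet_lim x)) <= e.
Proof.
move=> e_gt0; have [N F_close] := F_unif_cauchy e_gt0.
exists N => n Nn x Kx; split.
  apply: (@Un_cv_Rabs_ub (fun m => F n x - F m x) _ _ N) => [|m Nm].
    exact: CV_minus (Un_cv_const _) (jet_lim_cv Kx).
  exact: Rlt_le (proj1 (F_close n m Nn Nm x Kx)).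
apply: (@Un_cv_ub (fun m => vnorm (vsub (dF n x) (dF m x))) _ _ N) => [|m Nm].
  by apply: vnorm_cv => i; exact: CV_minus (Un_cv_const _) (djet_lim_cv i Kx).
exact: Rlt_le (proj2 (F_close n m Nn Nm x Kx)).
Qed.

Lemma jet_lim_path_increment n (eta : R) (gam : R -> Vec d) (a b L : R) :
  0 <= eta -> (exists N, forall m, (N <= m)%nat -> forall z, K z ->
                 vnorm (vsub (dF m z) (dF n z)) <= eta) ->
  path_in K gam a b -> length_le gam a b L ->
  Rabs ((jet_lim (gam b) - F n (gam b)) - (jet_lim (gam a) - F n (gam a))) <= eta * L.
Proof.
move=> eta_ge0 [N dF_close] gam_path len_le.
have [ab [gam_in _]] := gam_path.
have in_a : K (gam a) by apply: gam_in; lra.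
have in_b : K (gam b) by apply: gam_in; lra.
apply: (@Un_cv_Rabs_ub (fun m => (F m (gam b) - F n (gam b)) - (F m (gam a) - F n (gam a))) _ _ N).
  by apply: CV_minus; apply: CV_minus; auto using Un_cv_const, jet_lim_cv.
move=> m Nm; apply: (path_increment_le (g := fun z => F m z - F n z)) gam_path len_le => //.
by apply: cont_deriv_sub_lip; [exact: (proj2 (F_jet m)) | exact: (proj2 (F_jet n)) | exact: dF_close].
Qed.

Lemma jet_lim_rem_small : pw_whitney_regular K ->
  forall x, K x -> forall e, 0 < e -> exists del, 0 < del /\
    forall y, K y -> y <> x -> vnorm (vsub y x) < del ->
      Rabs ((jet_lim y - jet_lim x - dot (djet_lim x) (vsub y x)) / vnorm (vsub y x)) < e.
Proof.
move=> K_whitney x Kx e e_gt0.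
have [V [C [V_open [Vx [C_gt0 V_paths]]]]] := K_whitney x Kx.
have [r [r_gt0 ball_V]] := V_open x Vx.
pose eta := e / (C + 3).
have eta_gt0 : 0 < eta by apply: Rdiv_lt_0_compat; lra.
have eta_eq : eta * (C + 3) = e by rewrite /eta; field; lra.
have [N1 dF_cauchy] := F_unif_cauchy eta_gt0.
have [N2 F_lim_close] := jet_lim_uniform eta_gt0.
pose n := Nat.max N1 N2.
have [del [del_gt0 Fn_rem]] := proj2 (proj2 (F_jet n)) x Kx eta eta_gt0.
exists (Rmin r del); split=> [|y Ky y_neq_x yx]; first exact: Rmin_glb_lt.
have yx_gt0 := vnorm_vsub_gt0 y_neq_x.
apply: Rabs_div_lt => //.
have [gam [a [b [gam_path [gam_a [gam_b len_le]]]]]] :=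
  V_paths y (ball_V y (Rlt_le_trans _ _ _ yx (Rmin_l _ _))) Ky.
have lim_incr_le := jet_lim_path_increment (Rlt_le _ _ eta_gt0)
  (ex_intro _ N1 (fun m N1m z Kz =>
     Rlt_le _ _ (proj2 (dF_cauchy m n N1m (Nat.le_max_l _ _) z Kz))))
  gam_path len_le.
rewrite gam_a gam_b vnorm_sym in lim_incr_le.
have Fn_rem_le := Rabs_le_of_div_lt yx_gt0
  (Fn_rem y Ky y_neq_x (Rlt_le_trans _ _ _ yx (Rmin_r _ _))).
have dot_le := Rle_trans _ _ _ (dot_sub_le (dF n x) (djet_lim x) (vsub y x))
  (Rmult_le_compat_r _ _ _ (vnorm_ge0 (vsub y x))
     (proj2 (F_lim_close n (Nat.le_max_r _ _) x Kx))).
have -> : jet_lim y - jet_lim x - dot (djet_lim x) (vsub y x) =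
  ((jet_lim y - F n y) - (jet_lim x - F n x)) + (F n y - F n x - dot (dF n x) (vsub y x))
  + (dot (dF n x) (vsub y x) - dot (djet_lim x) (vsub y x)) by ring.
by apply: Rle_lt_trans (Rabs_add3_le lim_incr_le Fn_rem_le dot_le) _; nra.
Qed.

Lemma jet_lim_in_J1 : pw_whitney_regular K -> in_J1 K jet_lim djet_lim.
Proof.
move=> K_whitney; split; last split; last exact: jet_lim_rem_small.
  apply: (cont_on_unif_lim (fun n => proj1 (F_jet n))) => e e_gt0.
  have [N FN_close] := jet_lim_uniform e_gt0.
  by exists N => x Kx; exact: (proj1 (FN_close N (le_n N) x Kx)).
apply: (vcont_on_unif_lim (fun n => proj1 (proj2 (F_jet n)))) => e e_gt0.
have [N FN_close] := jet_lim_uniform e_gt0.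
by exists N => x Kx; exact: (proj2 (FN_close N (le_n N) x Kx)).
Qed.

Lemma jet_lim_J1dist_cv e : 0 < e -> exists N, forall n, (N <= n)%nat ->
  J1dist K (F n) (dF n) jet_lim djet_lim < e.
Proof.
move=> e_gt0; have [N F_lim_close] := jet_lim_uniform (e := e / 3) ltac:(lra).
exists N => n Nn; rewrite /J1dist /J1norm.
have := supK_le (K := K) (g := fun x => Rabs (F n x - jet_lim x)) (B := e / 3) ltac:(lra)
  (fun x Kx => proj1 (F_lim_close n Nn x Kx)).
have := supK_le (K := K) (g := fun x => vnorm (vsub (dF n x) (djet_lim x))) (B := e / 3) ltac:(lra)
  (fun x Kx => proj2 (F_lim_close n Nn x Kx)).
lra.
Qed.

End JetLimit.

Theorem mainTheorem6 (d : nat) (K : Vec d -> Prop) :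
  compact_set K -> pw_whitney_regular K ->
  forall (F : nat -> Vec d -> R) (dF : nat -> Vec d -> Vec d),
    (forall n, in_J1 K (F n) (dF n)) ->
    (forall eps, 0 < eps -> exists N, forall m n, (N <= m)%nat -> (N <= n)%nat ->
        J1dist K (F m) (dF m) (F n) (dF n) < eps) ->
    exists (f : Vec d -> R) (df : Vec d -> Vec d),
      in_J1 K f df /\
      (forall eps, 0 < eps -> exists N, forall n, (N <= n)%nat ->
          J1dist K (F n) (dF n) f df < eps).
Proof.
move=> K_compact K_whitney F dF F_jet F_cauchy.
have F_unif_cauchy e : 0 < e -> exists N, forall m n, (N <= m)%nat -> (N <= n)%nat ->
    forall x, K x -> Rabs (F m x - F n x) < e /\ vnorm (vsub (dF m x) (dF n x)) < e.
  move=> e_gt0; have [N dist_lt] := F_cauchy e e_gt0.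
  by exists N => m n Nm Nn; apply: J1dist_lt_pointwise (dist_lt m n Nm Nn).
exists (jet_lim F), (djet_lim dF); split.
  exact: jet_lim_in_J1.
exact: jet_lim_J1dist_cv.
Qed.
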